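(* Let $\langle A;\cdot\rangle$ be a semigroup satisfying condition $( * )$. Then $\langle A;\cdot\rangle$ is an Abelian algebra if and only if $\langle A;\cdot\rangle$ is an inflation of a subsemigroup which is semisimple and is an Abelian algebra.
   Context: $A\cdot A=\{xy\mid x,y\in A\}$. Condition $( * )$: either ($bcA=bA$ and $Abc=Ac$ for all $b,c\in A$), or the set $A\cdot A$ is finite. A semigroup is semisimple if each of its principal factors is simple or $0$-simple. A semigroup $\langle A;\cdot\rangle$ is an inflation of a subsemigroup $\langle B;\cdot\rangle$ if there is a partition $\{X_b\mid b\in B\}$ of $A$ with $b\in X_b$ and $x\cdot y=a\cdot b$ for all $a,b\in B$, $x\in X_a$, $y\in X_b$. A polynomial operation of an algebra is an operation obtained from a term by substituting elements of the algebra for some of its variables. An algebra is called Abelian if for every polynomial operation $t(x,y_1,\ldots,y_n)$ and all elements $u,v,c_1,\ldots,c_n,d_1,\ldots,d_n$ of the algebra, $t(u,c_1,\ldots,c_n)=t(u,d_1,\ldots,d_n)$ implies $t(v,c_1,\ldots,c_n)=t(v,d_1,\ldots,d_n)$. *)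

From Stdlib Require Import List ClassicalEpsilon.

Section Semigroups.
Context {T : Type}.

(* Terms over the signature {.} with variables indexed by nat and constants
   from the algebra: these are exactly the polynomial operations. *)
Inductive pterm : Type :=
| PVar (n : nat)
| PConst (c : T)
| PMul (t1 t2 : pterm).

Fixpoint peval (mul : T -> T -> T) (e : nat -> T) (t : pterm) : T :=
  match t with
  | PVar n => e n
  | PConst c => c
  | PMul t1 t2 => mul (peval mul e t1) (peval mul e t2)
  end.

Fixpoint consts_in (P : T -> Prop) (t : pterm) : Prop :=
  match t with
  | PVar _ => True
  | PConst c => P c
  | PMul t1 t2 => consts_in P t1 /\ consts_in P t2
  end.

(* environment: variable 0 is x, variable (S i) is y_(i+1) *)
Definition scons (u : T) (c : nat -> T) : nat -> T :=
  fun n => match n with O => u | S k => c k end.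

Definition abelian_in (P : T -> Prop) (mul : T -> T -> T) : Prop :=
  forall (t : pterm), consts_in P t ->
  forall (u v : T) (c d : nat -> T),
    P u -> P v -> (forall n, P (c n)) -> (forall n, P (d n)) ->
    peval mul (scons u c) t = peval mul (scons u d) t ->
    peval mul (scons v c) t = peval mul (scons v d) t.

Definition ideal_in (P : T -> Prop) (mul : T -> T -> T) (K : T -> Prop) : Prop :=
  (exists k, K k) /\ (forall k, K k -> P k) /\
  (forall s k, P s -> K k -> K (mul s k) /\ K (mul k s)).

Definition simple_in (P : T -> Prop) (mul : T -> T -> T) : Prop :=
  forall K, ideal_in P mul K -> forall x, P x -> K x.

Definition zero_simple_in (P : T -> Prop) (mul : T -> T -> T) : Prop :=
  exists z, P z /\ (forall x, P x -> mul z x = z /\ mul x z = z) /\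
  (exists x y, P x /\ P y /\ mul x y <> z) /\
  (forall K, ideal_in P mul K ->
     (forall x, K x <-> x = z) \/ (forall x, P x -> K x)).

End Semigroups.

Arguments pterm : clear implicits.

Section Principal.
Context {A : Type} (mul : A -> A -> A) (B : A -> Prop).

(* principal two-sided ideal J(a) = B^1 a B^1 inside the semigroup B *)
Definition Jideal (a : A) : A -> Prop := fun x =>
  B x /\ (x = a \/ (exists s, B s /\ x = mul s a) \/ (exists t, B t /\ x = mul a t)
          \/ (exists s t, B s /\ B t /\ x = mul (mul s a) t)).

Definition Jclass (a : A) : A -> Prop := fun x =>
  B x /\ forall y, Jideal a y <-> Jideal x y.

Definition Iideal (a : A) : A -> Prop := fun x => Jideal a x /\ ~ Jclass a x.

(* Rees quotient J(a)/I(a): carrier J_a together with a new zero None *)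
Definition rees_carrier (a : A) : option A -> Prop := fun o =>
  match o with None => True | Some x => Jclass a x end.

Definition rees_mul (a : A) (o1 o2 : option A) : option A :=
  match o1, o2 with
  | Some x, Some y =>
      if excluded_middle_informative (Jclass a (mul x y))
      then Some (mul x y) else None
  | _, _ => None
  end.

(* the principal factor of a (a in B) is simple or 0-simple:
   it is J(a) if I(a) is empty, and the Rees quotient J(a)/I(a) otherwise *)
Definition principal_factor_ok (a : A) : Prop :=
  ((forall x, ~ Iideal a x) ->
     simple_in (Jideal a) mul \/ zero_simple_in (Jideal a) mul) /\
  ((exists x, Iideal a x) ->
     simple_in (rees_carrier a) (rees_mul a) \/
     zero_simple_in (rees_carrier a) (rees_mul a)).

Definition semisimple_in : Prop := forall a, B a -> principal_factor_ok a.

Definition subsemigroup : Prop := forall x y, B x -> B y -> B (mul x y).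

(* <A;.> is an inflation of <B;.>: a partition {X_b | b in B} of A with
   b in X_b and x y = a b for x in X_a, y in X_b *)
Definition inflation_of : Prop :=
  exists X : A -> A -> Prop,
    (forall b x, X b x -> B b) /\
    (forall x, exists! b, B b /\ X b x) /\
    (forall b, B b -> X b b) /\
    (forall a b x y, B a -> B b -> X a x -> X b y -> mul x y = mul a b).

End Principal.

Definition condition_star {A : Type} (mul : A -> A -> A) : Prop :=
  (forall b c : A,
     (forall y, (exists x, y = mul (mul b c) x) <-> (exists x, y = mul b x)) /\
     (forall y, (exists x, y = mul x (mul b c)) <-> (exists x, y = mul x c)))
  \/ (exists l : list A, forall x y, In (mul x y) l).

(* If A is Abelian then u a = u b forces v a = v b and a u = b u forces a v = b v,
   so an element's action by multiplication only depends on its "shape".  Under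
   ( * ) every x acts on both sides exactly like some element of A.A (in the
   finite case: like x e for an idempotent power e of x), and every product lies
   in (A.A) b (A.A) for every b.  Hence A is an inflation of B = A.A, and B is a
   simple semigroup, in particular semisimple.  Conversely, in an inflation of B
   every product only depends on the blocks of its factors, so a polynomial
   identity of A reduces to one of B through the retraction onto B. *)
From Stdlib Require Import List ClassicalEpsilon.
From Stdlib Require Import Classical FinFun Arith Lia.

Section Powers.
Variables (A : Type) (mul : A -> A -> A).
Hypothesis assoc : forall x y z : A, mul x (mul y z) = mul (mul x y) z.

(* [power x n] is x^(n+1). *)
Fixpoint power (x : A) (n : nat) : A :=
  match n with O => x | S k => mul x (power x k) end.

Lemma power_add x a b : mul (power x a) (power x b) = power x (S (a + b)).
Proof.
  induction a as [|a IH]; simpl; [reflexivity|].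
  now rewrite <- assoc, IH.
Qed.

Lemma power_succ_r x n : power x (S n) = mul (power x n) x.
Proof.
  induction n as [|n IH]; simpl; [reflexivity|].
  simpl in IH. now rewrite IH at 1; rewrite assoc.
Qed.

Lemma power_shift x i j : power x i = power x j ->
  forall r, power x (i + r) = power x (j + r).
Proof.
  intros E r; induction r as [|r IH]; [now rewrite !Nat.add_0_r|].
  rewrite !Nat.add_succ_r, !power_succ_r, IH. reflexivity.
Qed.

Lemma power_periodic x i j : i <= j -> power x i = power x j ->
  forall c r, power x (i + r) = power x (i + r + c * (j - i)).
Proof.
  intros Hij E c; induction c as [|c IH]; intro r; [now rewrite Nat.add_0_r|].
  replace (i + r + S c * (j - i)) with (j + (r + c * (j - i))) by lia.
  rewrite <- (power_shift x i j E).
  rewrite IH. f_equal. lia.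
Qed.

Lemma finite_squares_power_collision x (l : list A) :
  (forall p q, In (mul p q) l) -> exists i j, i < j /\ power x i = power x j.
Proof.
  intro Hl; apply NNPP; intro Hno.
  set (f := fun n => power x (S n)).
  assert (f_inj : Injective f).
  { intros i j Hij; unfold f in Hij.
    destruct (Nat.lt_total i j) as [h|[h|h]]; auto; exfalso; apply Hno.
    - exists (S i), (S j); split; [lia|exact Hij].
    - exists (S j), (S i); split; [lia|auto]. }
  pose proof (Injective_map_NoDup f_inj (seq_NoDup (S (length l)) 0)) as Hnodup.
  assert (Hincl : incl (map f (seq 0 (S (length l)))) l).
  { intros y Hy; apply in_map_iff in Hy; destruct Hy as [n [<- _]]; apply Hl. }
  pose proof (NoDup_incl_length Hnodup Hincl) as Hlen.
  rewrite length_map, length_seq in Hlen. lia.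
Qed.

Lemma finite_squares_idempotent_power x (l : list A) :
  (forall p q, In (mul p q) l) -> exists n, mul (power x n) (power x n) = power x n.
Proof.
  intro Hl.
  destruct (finite_squares_power_collision x l Hl) as [i [j [Hij E]]].
  (* x^m is idempotent for the multiple m = (i+1)(j-i) of the period, m > i *)
  set (m := S i * (j - i)).
  assert (Hm : S i <= m) by (unfold m; nia).
  exists (m - 1). rewrite power_add.
  replace (m - 1) with (i + (m - 1 - i)) at 3 by lia.
  rewrite (power_periodic x i j (Nat.lt_le_incl _ _ Hij) E (S i)).
  f_equal. fold m. lia.
Qed.

End Powers.

Lemma consts_in_weaken {T : Type} (P Q : T -> Prop) (t : pterm T) :
  (forall x, P x -> Q x) -> consts_in P t -> consts_in Q t.
Proof. intro PQ; induction t; simpl; intuition. Qed.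

Section AbelianSemigroup.
Variables (A : Type) (mul : A -> A -> A).
Hypothesis abelian : abelian_in (fun _ : A => True) mul.

Lemma abelian_in_sub (P : A -> Prop) : abelian_in P mul.
Proof.
  intros t Ht u v c d _ _ _ _.
  apply abelian; auto. exact (consts_in_weaken P _ t (fun _ _ => I) Ht).
Qed.

Lemma abelian_mulL_transfer u v a b : mul u a = mul u b -> mul v a = mul v b.
Proof.
  exact (abelian (PMul (PVar 0) (PVar 1)) (conj I I) u v (fun _ => a) (fun _ => b)
           I I (fun _ => I) (fun _ => I)).
Qed.

Lemma abelian_mulR_transfer u v a b : mul a u = mul b u -> mul a v = mul b v.
Proof.
  exact (abelian (PMul (PVar 1) (PVar 0)) (conj I I) u v (fun _ => a) (fun _ => b)
           I I (fun _ => I) (fun _ => I)).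
Qed.

End AbelianSemigroup.

Definition is_product {A : Type} (mul : A -> A -> A) (x : A) : Prop :=
  exists p q, x = mul p q.

Section Products.
Variables (A : Type) (mul : A -> A -> A).
Hypothesis assoc : forall x y z : A, mul x (mul y z) = mul (mul x y) z.
Hypothesis mulL_transfer : forall u v a b, mul u a = mul u b -> mul v a = mul v b.
Hypothesis mulR_transfer : forall u v a b, mul a u = mul b u -> mul a v = mul b v.

Definition represents (b x : A) : Prop :=
  (forall z, mul z x = mul z b) /\ (forall z, mul x z = mul b z).

Lemma is_product_subsemigroup : subsemigroup mul (is_product mul).
Proof. intros x y _ _; exists x, y; reflexivity. Qed.

Lemma representative_of_divisible_square x y1 y2 :
  mul x x = mul (mul x x) y1 -> mul x x = mul y2 (mul x x) ->
  exists b, is_product mul b /\ represents b x.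
Proof.
  intros Hr Hl.
  assert (L : forall z, mul z x = mul z (mul x y1)).
  { intro z; apply (mulL_transfer x); now rewrite assoc. }
  assert (R : forall z, mul x z = mul (mul y2 x) z).
  { intro z; apply (mulR_transfer x); now rewrite <- assoc. }
  assert (E : mul x y1 = mul y2 x) by now rewrite R, <- assoc, <- L.
  exists (mul x y1); split; [now exists x, y1|split; [exact L|]].
  intro z; now rewrite E.
Qed.

Lemma representative_of_idempotent_power x n :
  mul (power A mul x n) (power A mul x n) = power A mul x n ->
  exists b, is_product mul b /\ represents b x.
Proof.
  set (e := power A mul x n); intro He.
  assert (Ecomm : mul x e = mul e x) by (unfold e; now rewrite <- power_succ_r).
  exists (mul x e); split; [now exists x, e|split].
  - intro z; apply (mulL_transfer e). now rewrite Ecomm, assoc, He.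
  - intro z; apply (mulR_transfer e). now rewrite <- assoc, He.
Qed.

Hypothesis star : condition_star mul.

Lemma product_representative x : exists b, is_product mul b /\ represents b x.
Proof.
  destruct star as [Hideal|[l Hl]].
  - destruct (Hideal x x) as [HR HL].
    destruct (proj2 (HR (mul x x)) (ex_intro _ x eq_refl)) as [y1 Hy1].
    destruct (proj2 (HL (mul x x)) (ex_intro _ x eq_refl)) as [y2 Hy2].
    exact (representative_of_divisible_square x y1 y2 Hy1 Hy2).
  - destruct (finite_squares_idempotent_power A mul assoc x l Hl) as [n Hn].
    exact (representative_of_idempotent_power x n Hn).
Qed.

Lemma product_between_of_divisible a1 a2 b x :
  mul a1 a2 = mul x (mul b a2) ->
  exists s t, is_product mul s /\ is_product mul t /\ mul a1 a2 = mul (mul s b) t.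
Proof.
  intro Hx.
  destruct (product_representative x) as [x' [Px' [_ Rx]]].
  destruct (product_representative a2) as [a' [Pa' [La _]]].
  exists x', a'; split; [exact Px'|split; [exact Pa'|]].
  now rewrite Hx, assoc, Rx, La.
Qed.

Lemma product_between_of_idempotent_power a1 a2 b n :
  mul (power A mul b n) (power A mul b n) = power A mul b n ->
  exists s t, is_product mul s /\ is_product mul t /\ mul a1 a2 = mul (mul s b) t.
Proof.
  set (e := power A mul b n); intro He.
  (* e = e e = b . b^(2n+1) *)
  assert (Hw : e = mul b (power A mul b (n + n))) by (unfold e in *; now rewrite <- He, power_add).
  assert (K : forall v, mul a1 v = mul (mul a1 e) v).
  { intro v; apply (mulR_transfer e). now rewrite <- assoc, He. }
  exists (mul a1 e), (mul (power A mul b (n + n)) a2).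
  split; [now exists a1, e|split; [now eexists _, _|]].
  rewrite K, <- He at 1. rewrite Hw at 2. now rewrite !assoc.
Qed.

Lemma product_between a b : is_product mul a ->
  exists s t, is_product mul s /\ is_product mul t /\ a = mul (mul s b) t.
Proof.
  intros [a1 [a2 ->]].
  destruct star as [Hideal|[l Hl]].
  - destruct (Hideal b a2) as [_ HL].
    destruct (proj2 (HL (mul a1 a2)) (ex_intro _ a1 eq_refl)) as [x Hx].
    exact (product_between_of_divisible a1 a2 b x Hx).
  - destruct (finite_squares_idempotent_power A mul assoc b l Hl) as [n Hn].
    exact (product_between_of_idempotent_power a1 a2 b n Hn).
Qed.

End Products.

Section InflationOfRepresentatives.
Variables (A : Type) (mul : A -> A -> A) (B : A -> Prop).
Hypothesis rep : forall x, exists b, B b /\ represents A mul b x.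

Lemma inflation_of_representatives : inflation_of mul B.
Proof.
  assert (choose : forall x, {b | B b /\ represents A mul b x})
    by (intro x; exact (constructive_indefinite_description _ (rep x))).
  set (r := fun x => proj1_sig (choose x)).
  assert (Hr : forall x, B (r x) /\ represents A mul (r x) x)
    by (intro x; exact (proj2_sig (choose x))).
  (* the block of b is b itself together with the non-members represented by b *)
  exists (fun b x => B b /\ (x = b \/ (~ B x /\ b = r x))).
  split; [now intros b x []|split; [|split]].
  - intro x; destruct (classic (B x)) as [Bx|nBx].
    + exists x; split; [tauto|].
      intros b' [_ [_ [E|[nBx _]]]]; [now symmetry|contradiction].
    + exists (r x); split; [split; [apply Hr|split; [apply Hr|tauto]]|].
      intros b' [Bb' [_ [E|[_ E]]]]; [subst; contradiction|now symmetry].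
  - intros b Bb; tauto.
  - intros a b x y _ _ [_ Hx] [_ Hy].
    assert (Rx : forall z, mul x z = mul a z)
      by (destruct Hx as [->|[_ ->]]; [auto|apply Hr]).
    assert (Ly : forall z, mul z y = mul z b)
      by (destruct Hy as [->|[_ ->]]; [auto|apply Hr]).
    now rewrite Rx, Ly.
Qed.

End InflationOfRepresentatives.

Section SimpleSemigroup.
Variables (A : Type) (mul : A -> A -> A) (B : A -> Prop).
Hypothesis between : forall a b, B a -> B b ->
  exists s t, B s /\ B t /\ a = mul (mul s b) t.

Lemma Jideal_full a y : B a -> Jideal mul B a y <-> B y.
Proof.
  intro Ba; split; [now intros []|].
  intro By; split; [exact By|].
  destruct (between y a By Ba) as [s [t [Bs [Bt E]]]].
  right; right; right; now exists s, t.
Qed.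

Lemma semisimple_of_between : semisimple_in mul B.
Proof.
  intros a Ba; split.
  - intros _; left.
    intros K [[k Kk] [KJ Kcl]] x Jx.
    apply (Jideal_full a x Ba) in Jx.
    assert (Bk : B k) by exact (proj1 (Jideal_full a k Ba) (KJ k Kk)).
    destruct (between x k Jx Bk) as [s [t [Bs [Bt ->]]]].
    apply (Kcl t (mul s k)); [now apply Jideal_full|].
    apply (Kcl s k); [now apply Jideal_full|exact Kk].
  - (* every element of B generates the whole of B, so I(a) is empty *)
    intros [x [Jx NJ]]; exfalso; apply NJ.
    assert (Bx : B x) by exact (proj1 (Jideal_full a x Ba) Jx).
    split; [exact Bx|].
    intro y; rewrite (Jideal_full a y Ba), (Jideal_full x y Bx); tauto.
Qed.

End SimpleSemigroup.

Section Retraction.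
Variables (A : Type) (mul : A -> A -> A) (B : A -> Prop).

Fixpoint tmap (phi : A -> A) (t : pterm A) : pterm A :=
  match t with
  | PVar n => PVar n
  | PConst c => PConst (phi c)
  | PMul t1 t2 => PMul (tmap phi t1) (tmap phi t2)
  end.

Lemma inflation_retraction : inflation_of mul B ->
  exists phi : A -> A, (forall x, B (phi x)) /\ (forall b, B b -> phi b = b) /\
    (forall x y, mul x y = mul (phi x) (phi y)).
Proof.
  intros [X [_ [block [self prod]]]].
  assert (choose : forall x, {b | B b /\ X b x}).
  { intro x; apply constructive_indefinite_description.
    destruct (block x) as [b [Hb _]]; now exists b. }
  exists (fun x => proj1_sig (choose x)); split; [|split].
  - intro x; apply (proj2_sig (choose x)).
  - intros b Bb; destruct (choose b) as [b' Hb']; simpl.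
    destruct (block b) as [b0 [_ U]].
    rewrite <- (U b' Hb'); apply U; auto.
  - intros x y; destruct (choose x) as [a [Ba Xa]], (choose y) as [b [Bb Xb]]; simpl.
    now apply prod.
Qed.

Variable phi : A -> A.
Hypothesis sub : subsemigroup mul B.
Hypothesis phi_in : forall x, B (phi x).
Hypothesis phi_id : forall b, B b -> phi b = b.
Hypothesis mul_phi : forall x y, mul x y = mul (phi x) (phi y).

Lemma phi_mul x y : phi (mul x y) = mul (phi x) (phi y).
Proof. rewrite mul_phi at 1. apply phi_id, sub; apply phi_in. Qed.

Lemma consts_in_tmap t : consts_in B (tmap phi t).
Proof. induction t; simpl; auto. Qed.

Lemma phi_peval t (e e' : nat -> A) : (forall n, e' n = phi (e n)) ->
  phi (peval mul e t) = peval mul e' (tmap phi t).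
Proof.
  intro He; induction t; simpl; auto.
  now rewrite phi_mul, IHt1, IHt2.
Qed.

Lemma peval_PMul_phi t1 t2 (e e' : nat -> A) : (forall n, e' n = phi (e n)) ->
  peval mul e (PMul t1 t2) = peval mul e' (tmap phi (PMul t1 t2)).
Proof. intro He; simpl; now rewrite mul_phi, !(phi_peval _ e e'). Qed.

Lemma abelian_of_retraction : abelian_in B mul -> abelian_in (fun _ : A => True) mul.
Proof.
  intros HabB t _ u v c d _ _ _ _ H.
  (* terms without multiplication are trivially Abelian *)
  destruct t as [[|n]|c0|t1 t2]; [simpl in *; auto..|].
  assert (Hscons : forall w f n, scons (phi w) (fun k => phi (f k)) n = phi (scons w f n))
    by (intros w f [|n]; reflexivity).
  rewrite (peval_PMul_phi t1 t2 _ _ (Hscons u c)),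
    (peval_PMul_phi t1 t2 _ _ (Hscons u d)) in H.
  rewrite (peval_PMul_phi t1 t2 _ _ (Hscons v c)), (peval_PMul_phi t1 t2 _ _ (Hscons v d)).
  exact (HabB (tmap phi (PMul t1 t2)) (consts_in_tmap (PMul t1 t2)) (phi u) (phi v)
           _ _ (phi_in u) (phi_in v) (fun n => phi_in (c n)) (fun n => phi_in (d n)) H).
Qed.

End Retraction.

Theorem mainTheorem17 (A : Type) (mul : A -> A -> A)
  (assoc : forall x y z : A, mul x (mul y z) = mul (mul x y) z)
  (Hstar : condition_star mul) :
  abelian_in (fun _ : A => True) mul <->
  exists B : A -> Prop,
    subsemigroup mul B /\ inflation_of mul B /\
    semisimple_in mul B /\ abelian_in B mul.
Proof.
  split.
  - intro Hab.
    pose proof (abelian_mulL_transfer A mul Hab) as HL.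
    pose proof (abelian_mulR_transfer A mul Hab) as HR.
    exists (is_product mul); split; [|split; [|split]].
    + apply is_product_subsemigroup.
    + exact (inflation_of_representatives A mul _ (product_representative A mul assoc HL HR Hstar)).
    + apply semisimple_of_between.
      intros a b Pa _; exact (product_between A mul assoc HL HR Hstar a b Pa).
    + exact (abelian_in_sub A mul Hab _).
  - intros [B [Hsub [Hinf [_ HabB]]]].
    destruct (inflation_retraction A mul B Hinf) as [phi [phi_in [phi_id mul_phi]]].
    exact (abelian_of_retraction A mul B phi Hsub phi_in phi_id mul_phi HabB).
Qed.
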